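(* Let $n\geq 5$, let $S$ be the set of all $3$-cycles in $S_n$, and let $CAG_n=\mathrm{Cay}(A_n,S)$. Let $\tau,\kappa\in S$ with $\tau\neq\kappa$. Then $\tau\kappa=\kappa\tau\neq e$ if and only if there is a unique $4$-cycle in $CAG_n$ containing the vertices $e$, $\tau$ and $\kappa$.
   Context: For a finite group $\Gamma$ and a subset $T\subseteq\Gamma$ with $e\notin T$ and $T=T^{-1}$, the Cayley graph $\mathrm{Cay}(\Gamma,T)$ is the undirected graph with vertex set $\Gamma$ and edge set $\{\{\gamma,t\gamma\}\mid \gamma\in\Gamma, t\in T\}$. $e$ denotes the identity permutation. *)

From mathcomp Require Import all_boot all_fingroup all_solvable.
Set Implicit Arguments. Unset Strict Implicit. Unset Printing Implicit Defensive.
Local Open Scope group_scope.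

Definition is_3cycle (n : nat) (s : 'S_n) : bool :=
  [exists a : 'I_n, exists b : 'I_n, exists c : 'I_n,
    [&& a != b, b != c, a != c, s a == b, s b == c, s c == a &
        [forall x : 'I_n, [&& x != a, x != b & x != c] ==> (s x == x)]]].

Definition three_cycles (n : nat) : {set 'S_n} :=
  [set s : 'S_n | is_3cycle s].

Definition cay_adj (gT : finGroupType) (Gamma T : {set gT}) (x y : gT) : bool :=
  [&& x \in Gamma, y \in Gamma & y * x^-1 \in T].

Definition CAG_adj (n : nat) : rel 'S_n :=
  fun x y => cay_adj (Alt 'I_n) (three_cycles n) x y.

(* A 4-cycle of a graph with adjacency adj, viewed as a subgraph, is given by
   its edge set {ab, bc, cd, da} for pairwise distinct vertices a,b,c,d with
   those four pairs adjacent. *)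
Definition is_4cycle (T : finType) (adj : rel T) (C : {set {set T}}) : Prop :=
  exists a b c d : T,
    [/\ [&& a != b, a != c, a != d, b != c, b != d & c != d],
        [/\ adj a b, adj b c, adj c d & adj d a] &
        C = [set [set a; b]; [set b; c]; [set c; d]; [set d; a]]].

Definition cycle_vertices (T : finType) (C : {set {set T}}) : {set T} := cover C.

From mathcomp Require Import all_boot all_fingroup all_solvable.
Set Implicit Arguments. Unset Strict Implicit. Unset Printing Implicit Defensive.
Local Open Scope group_scope.

(* Vertices of CAG_n are adjacent when they differ by a left factor in S, and S is
   closed under inversion and conjugation; hence for distinct 3-cycles p, q with
   q * p != 1 the vertices 1, p, q * p, q always form a 4-cycle, and so do
   1, q, p * q, p.  If p and q do not commute these two 4-cycles differ; if
   q = p^-1, two 4-cycles 1, s, p, p^-1 are obtained from a point outside the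
   support of p.  If p and q commute and p * q != 1, their supports are disjoint,
   so q * p^-1 moves six points and p, q are not adjacent: a 4-cycle through
   1, p, q is 1, p, x, q, and the factorisation q * p^-1 = (q * x^-1) (x * p^-1)
   into two 3-cycles forces x * p^-1 to be q or p^-1, i.e. x = q * p. *)

Section GroupFacts.
Variable G : groupType.
Implicit Types x y : G.

Lemma mulg_neqr x y : x != 1 -> x * y != y.
Proof. by rewrite -{2}[y]mul1g (inj_eq (mulIg y)). Qed.

Lemma mulg_neql x y : y != 1 -> x * y != x.
Proof. by rewrite -{2}[x]mulg1 (inj_eq (mulgI x)). Qed.

End GroupFacts.

Section Support.
Variable T : finType.
Implicit Types (p q : {perm T}) (a b c x : T).

Definition supp p := [set x | p x != x].

Lemma supp_perm p x : (p x \in supp p) = (x \in supp p).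
Proof. by rewrite !inE (inj_eq perm_inj). Qed.

Lemma suppV p : supp p^-1 = supp p.
Proof. by apply/setP=> x; rewrite !inE -(inj_eq (@perm_inj _ p)) permKV eq_sym. Qed.

Lemma suppM p q : supp (p * q) \subset supp p :|: supp q.
Proof.
apply/subsetP=> x; rewrite !inE permM; apply: contraR; rewrite negb_or !negbK.
by case/andP=> /eqP-> /eqP->.
Qed.

Lemma supp_neq p q x : x \in supp p -> x \notin supp q -> p != q.
Proof. by move=> xp; apply: contra => /eqP <-. Qed.

Section Disjoint.
Variables p q : {perm T}.
Hypothesis pq : [disjoint supp p & supp q].

Lemma permM_disjointl x : x \in supp p -> (p * q) x = p x.
Proof.
by rewrite -supp_perm permM => /(disjointFr pq); rewrite inE => /negbFE/eqP.
Qed.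

Lemma permM_disjointr x : x \in supp q -> (p * q) x = q x.
Proof.
by move=> xq; rewrite permM; move: (disjointFl pq xq); rewrite inE => /negbFE/eqP->.
Qed.

Lemma supp_disjointM : supp (p * q) = supp p :|: supp q.
Proof.
apply/eqP; rewrite eqEsubset suppM; apply/subsetP=> x.
case/setUP=> xs; rewrite inE.
  by rewrite permM_disjointl //; rewrite inE in xs.
by rewrite permM_disjointr //; rewrite inE in xs.
Qed.

End Disjoint.

Definition cyc3 a b c : {perm T} := tperm a b * tperm a c.

Lemma cyc3V a b c : (cyc3 a b c)^-1 = cyc3 a c b.
Proof. by rewrite invMg !tpermV. Qed.

Lemma cyc3J a b c p : (cyc3 a b c) ^ p = cyc3 (p a) (p b) (p c).
Proof. by rewrite conjMg !tpermJ. Qed.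

Section Cyc3.
Variables a b c : T.
Hypotheses (ab : a != b) (bc : b != c) (ac : a != c).

Lemma cyc3L : cyc3 a b c a = b.
Proof. by rewrite permM tpermL tpermD // eq_sym. Qed.

Lemma cyc3M : cyc3 a b c b = c.
Proof. by rewrite permM tpermR tpermL. Qed.

Lemma cyc3R : cyc3 a b c c = a.
Proof. by rewrite permM (tpermD ac bc) tpermR. Qed.

Lemma cyc3D x : x != a -> x != b -> x != c -> cyc3 a b c x = x.
Proof. by move=> xa xb xc; rewrite permM !tpermD // eq_sym. Qed.

Lemma odd_cyc3 : odd_perm (cyc3 a b c) = false.
Proof. by rewrite odd_permM !odd_tperm ab ac. Qed.

Lemma supp_cyc3 : supp (cyc3 a b c) = [set a; b; c].
Proof.
apply/setP=> x; rewrite !inE.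
have [->|xa] := eqVneq x a; first by rewrite cyc3L eq_sym ab.
have [->|xb] := eqVneq x b; first by rewrite cyc3M eq_sym bc.
have [->|xc] := eqVneq x c; first by rewrite cyc3R ac.
by rewrite cyc3D ?eqxx.
Qed.

End Cyc3.

Lemma cyc3_rot a b c : a != b -> b != c -> a != c -> cyc3 a b c = cyc3 b c a.
Proof.
move=> ab bc ac; have ba : b != a by rewrite eq_sym.
have ca : c != a by rewrite eq_sym.
apply/permP=> x.
have [->|xa] := eqVneq x a; first by rewrite cyc3L // cyc3R.
have [->|xb] := eqVneq x b; first by rewrite cyc3M // cyc3L.
have [->|xc] := eqVneq x c; first by rewrite cyc3R // cyc3M.
by rewrite !cyc3D.
Qed.

Lemma cyc3_mulV a b c d : uniq [:: a; b; c; d] ->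
  cyc3 a b c * (cyc3 a b d)^-1 = cyc3 b c d.
Proof.
rewrite /= !inE !negb_or -!andbA andbT => /and5P[ab ac ad bc /andP[bd cd]].
have [ba ca da] : [/\ b != a, c != a & d != a] by split; rewrite eq_sym.
have [cb db dc] : [/\ c != b, d != b & d != c] by split; rewrite eq_sym.
rewrite cyc3V; apply/permP=> x; rewrite permM.
have [->|xa] := eqVneq x a; first by rewrite cyc3L // cyc3R // cyc3D.
have [->|xb] := eqVneq x b; first by rewrite cyc3M // cyc3D // cyc3L.
have [->|xc] := eqVneq x c; first by rewrite cyc3R // cyc3L // cyc3M.
have [->|xd] := eqVneq x d; first by rewrite [cyc3 a b c d]cyc3D // cyc3M // cyc3R.
by rewrite !cyc3D.
Qed.

End Support.

Section Squares.
Variables (T : finType) (adj : rel T).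
Implicit Types (a b c d u v w x : T) (C : {set {set T}}).

Definition square a b c d : {set {set T}} :=
  [set [set a; b]; [set b; c]; [set c; d]; [set d; a]].

Definition is_square a b c d : bool :=
  [&& [&& a != b, a != c, a != d, b != c, b != d & c != d],
      adj a b, adj b c, adj c d & adj d a].

Definition on_4cycle u v w C : Prop :=
  is_4cycle adj C /\
  [/\ u \in cycle_vertices C, v \in cycle_vertices C & w \in cycle_vertices C].

Lemma cover_square a b c d x :
  (x \in cover (square a b c d)) = [|| x == a, x == b, x == c | x == d].
Proof.
apply/bigcupP/idP=> [[e] | ].
  by rewrite /square !inE -!orbA => /or4P[]/eqP->; rewrite !inE => /orP[]/eqP->; rewrite eqxx ?orbT.
by case/or4P=> /eqP->;
  [exists [set a; b] | exists [set b; c] | exists [set c; d] | exists [set d; a]];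
  rewrite !inE ?eqxx ?orbT.
Qed.

Lemma squareC a b c d : square a b c d = square b c d a.
Proof. by apply/setP=> e; rewrite /square !inE -!orbA orbC -!orbA. Qed.

Lemma square_rev a b c d : square a b c d = square a d c b.
Proof.
rewrite /square [[set a; d]]setUC [[set d; c]]setUC [[set c; b]]setUC [[set b; a]]setUC.
apply/setP=> e; rewrite !inE -!orbA.
by apply/idP/idP=> /or4P[]/eqP->; rewrite eqxx ?orbT.
Qed.

Lemma square_neq a b b' c d : b \notin [:: a; b'; c; d] -> square a b c d != square a b' c d.
Proof.
apply: contraNneq=> E; have : b \in cover (square a b c d) by rewrite cover_square eqxx orbT.
by rewrite E cover_square !inE.
Qed.

Lemma is_square_rot a b c d : is_square a b c d -> is_square b c d a.
Proof.
case/and5P=> /and5P[ab ac ad bc /andP[bd cd]] *; apply/and5P; split=> //.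
by rewrite bc bd cd /= ![_ == a]eq_sym ab ac ad.
Qed.

Lemma square_is_4cycle a b c d : is_square a b c d -> is_4cycle adj (square a b c d).
Proof. by case/and5P=> dist *; exists a, b, c, d. Qed.

Hypothesis adj_sym : symmetric adj.

Lemma is_4cycle_opposite C u v w :
  is_4cycle adj C -> u \in cycle_vertices C -> v \in cycle_vertices C ->
  w \in cycle_vertices C -> u != v -> u != w -> v != w -> ~~ adj v w ->
  exists x, [/\ adj v x, adj x w, x != u & C = square u v x w].
Proof.
case=> a [b [c [d [dist [ab bc cd da] ->]]]].
have : is_square a b c d by apply/and5P.
clear dist ab bc cd da; rewrite /cycle_vertices -/(square a b c d).
wlog -> : a b c d / u = a => [base sq hu|].
  move: (hu); rewrite cover_square => /or4P[]/eqP eu; move: hu.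
  - exact: base.
  - by rewrite squareC; apply: base eu (is_square_rot sq).
  - by rewrite 2!squareC; apply: base eu (is_square_rot (is_square_rot sq)).
  by rewrite 3!squareC; apply: base eu (is_square_rot (is_square_rot (is_square_rot sq))).
move=> /and5P[/and5P[_ ac _ _ _] _ bc cd _]; rewrite !cover_square => _.
move=> /or4P[]/eqP-> /or4P[]/eqP-> uv uw vw nadj; rewrite ?eqxx // in uv uw vw.
all: try by move: nadj; rewrite ?(adj_sym c b) ?(adj_sym d c) ?bc ?cd.
  by exists c; rewrite eq_sym ac.
by exists c; rewrite (adj_sym d c) (adj_sym c b) eq_sym ac square_rev.
Qed.

End Squares.

Section ThreeCycles.
Variable n : nat.
Local Notation S := (three_cycles n).
Implicit Types (p q r s t w : 'S_n) (a b c x : 'I_n).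

Lemma three_cyclesP p :
  reflect (exists a b c, [/\ a != b, b != c, a != c & p = cyc3 a b c]) (p \in S).
Proof.
rewrite inE; apply: (iffP existsP) => [[a /existsP[b /existsP[c]]] | [a [b [c [ab bc ac ->]]]]].
  case/and4P=> ab bc ac /and4P[/eqP pa /eqP pb /eqP pc /forallP pfix].
  exists a, b, c; split=> //; apply/permP=> x.
  have [->|xa] := eqVneq x a; first by rewrite cyc3L.
  have [->|xb] := eqVneq x b; first by rewrite cyc3M.
  have [->|xc] := eqVneq x c; first by rewrite cyc3R.
  by rewrite cyc3D //; apply/eqP/(implyP (pfix x)); rewrite xa xb xc.
exists a; apply/existsP; exists b; apply/existsP; exists c.
rewrite ab bc ac cyc3L // cyc3M // cyc3R // !eqxx /=.
by apply/forallP=> x; apply/implyP=> /and3P[xa xb xc]; rewrite cyc3D.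
Qed.

Lemma cyc3_three_cycles a b c : a != b -> b != c -> a != c -> cyc3 a b c \in S.
Proof. by move=> ab bc ac; apply/three_cyclesP; exists a, b, c. Qed.

Lemma card_supp_three_cycle p : p \in S -> #|supp p| = 3.
Proof.
case/three_cyclesP=> a [b [c [ab bc ac ->]]].
by rewrite supp_cyc3 // -setUA cardsU1 cards2 !inE negb_or ab ac bc.
Qed.

Lemma three_cycle_neq1 p : p \in S -> p != 1.
Proof.
case/three_cyclesP=> a [b [c [ab bc ac ->]]]; apply/eqP=> /permP/(_ a)/eqP.
by rewrite cyc3L // perm1 eq_sym (negbTE ab).
Qed.

Lemma three_cyclesV p : p \in S -> p^-1 \in S.
Proof.
by case/three_cyclesP=> a [b [c [ab bc ac ->]]]; rewrite cyc3V cyc3_three_cycles // eq_sym.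
Qed.

Lemma three_cyclesJ p q : p \in S -> p ^ q \in S.
Proof.
case/three_cyclesP=> a [b [c [ab bc ac ->]]].
by rewrite cyc3J cyc3_three_cycles ?(inj_eq perm_inj).
Qed.

Lemma three_cycles_Alt p : p \in S -> p \in Alt 'I_n.
Proof. by case/three_cyclesP=> a [b [c [ab bc ac ->]]]; rewrite Alt_even odd_cyc3. Qed.

Lemma three_cycle_at p a : p \in S -> a \in supp p ->
  [/\ a != p a, p a != p (p a), a != p (p a) & p = cyc3 a (p a) (p (p a))].
Proof.
case/three_cyclesP=> x [y [z [xy yz xz ->]]].
have [yx zy zx] : [/\ y != x, z != y & z != x] by split; rewrite eq_sym.
rewrite supp_cyc3 // !inE -orbA => /or3P[]/eqP->.
- by rewrite cyc3L // cyc3M.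
- by rewrite cyc3M // cyc3R // [cyc3 x y z]cyc3_rot.
by rewrite cyc3R // cyc3L // [cyc3 x y z]cyc3_rot // [cyc3 y z x]cyc3_rot.
Qed.

Lemma supp_three_cycle p a : p \in S -> a \in supp p -> supp p = [set a; p a; p (p a)].
Proof. by move=> pS ap; have [? ? ? pE] := three_cycle_at pS ap; rewrite {1}pE supp_cyc3. Qed.

Lemma three_cycle_inv p : p \in S -> p^-1 = p * p.
Proof.
move=> pS; apply/permP=> a; rewrite permM; apply: (canLR (permK p)).
have [ap | ] := boolP (a \in supp p); last by rewrite inE negbK => /eqP pa; rewrite !pa.
have [ab bc ac pE] := three_cycle_at pS ap.
by rewrite {1}pE cyc3R.
Qed.

Lemma eq_three_cycles p q a : p \in S -> q \in S -> a \in supp p ->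
  p a = q a -> p (p a) = q (p a) -> p = q.
Proof.
move=> pS qS ap pqa pqpa; have aq : a \in supp q by move: ap; rewrite !inE pqa.
have [_ _ _ ->] := three_cycle_at pS ap; have [_ _ _ ->] := three_cycle_at qS aq.
by rewrite -pqa pqpa.
Qed.

Lemma eq_three_cycles_commute p q a : p \in S -> q \in S -> commute p q ->
  a \in supp p -> p a = q a -> p = q.
Proof.
move=> pS qS pq ap pqa; apply: (eq_three_cycles pS qS ap pqa).
by rewrite {1}pqa -permM -pq permM.
Qed.

Lemma commute_three_cycles_disjoint p q : p \in S -> q \in S -> commute p q ->
  p != q -> p * q != 1 -> [disjoint supp p & supp q].
Proof.
move=> pS qS pq neq_pq pq1; apply/pred0P=> a /=; apply/negbTE/negP=> /andP[ap aq].
have : p a \in supp q by move: aq; rewrite !inE -permM pq permM (inj_eq perm_inj).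
rewrite (supp_three_cycle qS aq) !inE -orbA => /or3P[]/eqP pa.
- by move: ap; rewrite inE pa eqxx.
- by case/eqP: neq_pq; apply: eq_three_cycles_commute pa.
case/eqP: pq1; rewrite (eq_three_cycles_commute pS (three_cyclesV qS) (commuteV pq) ap) ?mulVg //.
by rewrite three_cycle_inv // permM.
Qed.

Lemma eq_three_cycles_agree p r w a : p \in S -> r \in S ->
  {in supp p, w =1 p} -> {in supp r, w =1 r} -> a \in supp p -> a \in supp r -> p = r.
Proof.
move=> pS rS wp wr ap ar; have pra : p a = r a by rewrite -wp // wr.
apply: (eq_three_cycles pS rS ap pra).
by rewrite -wp ?supp_perm // pra wr ?supp_perm.
Qed.

Lemma card_supp_mul_disjoint p q : p \in S -> q \in S -> [disjoint supp p & supp q] ->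
  #|supp (p * q)| = 6.
Proof.
move=> pS qS pq; rewrite supp_disjointM //.
have := leq_card_setU (supp p) (supp q); rewrite pq !card_supp_three_cycle //.
by case=> _ /eqP.
Qed.

Lemma mul_disjoint_three_cycles p q : p \in S -> q \in S -> [disjoint supp p & supp q] ->
  p * q \notin S.
Proof.
by move=> pS qS pq; apply/negP=> /card_supp_three_cycle; rewrite card_supp_mul_disjoint.
Qed.

(* [t * s] moves six points, so [s] and [t] have disjoint supports and [s] agrees
   with [p * q] on its own support. *)
Lemma disjoint_factor_three_cycles p q s t : p \in S -> q \in S -> s \in S -> t \in S ->
  [disjoint supp p & supp q] -> t * s = p * q -> s = p \/ s = q.
Proof.
move=> pS qS sS tS pq tspq.
have ts : [disjoint supp t & supp s].
  have [le_ts <-] := leq_card_setU (supp t) (supp s).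
  rewrite eqn_leq le_ts !card_supp_three_cycle //.
  by apply: leq_trans (subset_leq_card (suppM t s)); rewrite tspq card_supp_mul_disjoint.
have pqs : {in supp s, p * q =1 s} by move=> x xs; rewrite -tspq permM_disjointr.
have [a sa] : exists a, a \in supp s by apply/card_gt0P; rewrite card_supp_three_cycle.
have : a \in supp (p * q) by move: (sa); rewrite !inE pqs.
rewrite supp_disjointM // => /setUP[ap | aq].
  by left; apply: eq_three_cycles_agree pqs (permM_disjointl pq) sa ap.
by right; apply: eq_three_cycles_agree pqs (permM_disjointr pq) sa aq.
Qed.

End ThreeCycles.

Section Cayley.
Variable n : nat.
Local Notation S := (three_cycles n).
Local Notation adj := (@CAG_adj n).
Implicit Types (p q s t x y : 'S_n).

Lemma CAG_adjE x y : adj x y = (x \in Alt 'I_n) && (y * x^-1 \in S).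
Proof.
rewrite /CAG_adj /cay_adj; have [yxS | ] := boolP (y * x^-1 \in S); last by rewrite !andbF.
suff -> : (y \in Alt 'I_n) = (x \in Alt 'I_n) by rewrite !andbT andbb.
by rewrite -(mulgVK x y) groupMl //; apply: three_cycles_Alt.
Qed.

Lemma CAG_adj_sym : symmetric adj.
Proof.
suff adjV x y : adj x y -> adj y x by move=> x y; apply/idP/idP; apply: adjV.
rewrite !CAG_adjE => /andP[xA yxS].
rewrite -[x * y^-1]invgK invMg invgK three_cyclesV // andbT.
by rewrite -(mulgVK x y) groupMl //; apply: three_cycles_Alt.
Qed.

Lemma CAG_adj_mull x t : x \in Alt 'I_n -> t \in S -> adj x (t * x).
Proof. by move=> xA tS; rewrite CAG_adjE xA mulgK. Qed.

Lemma CAG_adj_mulr x t : x \in Alt 'I_n -> t \in S -> adj x (x * t).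
Proof.
by move=> xA tS; rewrite CAG_adjE xA -mulgA -{1}(invgK x) -conjgE three_cyclesJ.
Qed.

Lemma CAG_adj1 t : t \in S -> adj 1 t.
Proof. by move=> tS; rewrite -[t]mulg1 CAG_adj_mull. Qed.

Lemma CAG_nonadj_disjoint p q : p \in S -> q \in S -> [disjoint supp p & supp q] ->
  ~~ adj p q.
Proof.
move=> pS qS pq; rewrite CAG_adjE negb_and.
by rewrite (mul_disjoint_three_cycles qS (three_cyclesV pS)) ?orbT // suppV disjoint_sym.
Qed.

Lemma CAG_common_neighbour p q x : p \in S -> q \in S -> [disjoint supp p & supp q] ->
  adj p x -> adj x q -> x = 1 \/ x = q * p.
Proof.
move=> pS qS pq; rewrite !CAG_adjE => /andP[_ xpS] /andP[_ qxS].
have qp : [disjoint supp q & supp p^-1] by rewrite suppV disjoint_sym.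
have := disjoint_factor_three_cycles qS (three_cyclesV pS) xpS qxS qp.
rewrite mulgA mulgVK => /(_ erefl) [xpq | xpp]; last by left; rewrite -(mulgVK p x) xpp mulVg.
by right; rewrite -(mulgVK p x) xpq.
Qed.

Lemma CAG_square_mul p q : p \in S -> q \in S -> p != q -> q * p != 1 ->
  on_4cycle adj 1 p q (square 1 p (q * p) q).
Proof.
move=> pS qS pq qp1; have [p1 q1] := (three_cycle_neq1 pS, three_cycle_neq1 qS).
split; last by rewrite /cycle_vertices !cover_square !eqxx !orbT.
apply/square_is_4cycle/and5P; split.
- by rewrite !(eq_sym 1) p1 qp1 q1 pq eq_sym mulg_neqr // mulg_neql.
- exact: CAG_adj1.
- exact: CAG_adj_mull (three_cycles_Alt pS) qS.
- by rewrite CAG_adj_sym CAG_adj_mulr ?three_cycles_Alt.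
by rewrite CAG_adj_sym CAG_adj1.
Qed.

Lemma CAG_square_inv t s : t \in S -> s \in S -> t * s^-1 \in S ->
  s != t -> s != t^-1 -> t != t^-1 -> on_4cycle adj 1 t t^-1 (square 1 s t t^-1).
Proof.
move=> tS sS tsS s_t s_tV tt; have tVS := three_cyclesV tS.
split; last by rewrite /cycle_vertices !cover_square !eqxx !orbT.
apply/square_is_4cycle/and5P; split.
- by rewrite !(eq_sym 1) !three_cycle_neq1 // s_t s_tV tt.
- exact: CAG_adj1.
- by rewrite CAG_adjE three_cycles_Alt.
- by rewrite three_cycle_inv // CAG_adj_mulr ?three_cycles_Alt.
by rewrite CAG_adj_sym CAG_adj1.
Qed.

Lemma CAG_commuting_unique_4cycle p q : p \in S -> q \in S -> p != q ->
  commute p q -> p * q != 1 -> exists! C, on_4cycle adj 1 p q C.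
Proof.
move=> pS qS pq cpq pq1; have qp1 : q * p != 1 by rewrite -cpq.
exists (square 1 p (q * p) q); split; first exact: CAG_square_mul.
move=> C [C4 [C1 Cp Cq]].
have dpq := commute_three_cycles_disjoint pS qS cpq pq pq1.
have [p1 q1] : 1 != p /\ 1 != q by rewrite !(eq_sym 1) !three_cycle_neq1.
have [x [px xq x1 ->]] := is_4cycle_opposite CAG_adj_sym C4 C1 Cp Cq p1 q1 pq
  (CAG_nonadj_disjoint pS qS dpq).
by case: (CAG_common_neighbour pS qS dpq px xq) => x_eq; move: x1; rewrite x_eq ?eqxx.
Qed.

Lemma CAG_noncommuting_two_4cycles p q : p \in S -> q \in S -> p != q -> p * q != q * p ->
  exists C1 C2, [/\ C1 != C2, on_4cycle adj 1 p q C1 & on_4cycle adj 1 p q C2].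
Proof.
move=> pS qS pq ncpq; have [p1 q1] := (three_cycle_neq1 pS, three_cycle_neq1 qS).
have qp1 : q * p != 1.
  by apply: contraNneq ncpq => qp1; rewrite qp1 -(mulgK p q) qp1 mul1g mulgV.
have pq1 : p * q != 1.
  by apply: contraNneq ncpq => pq1; rewrite pq1 -(mulKg p q) pq1 mulg1 mulVg.
exists (square 1 p (q * p) q), (square 1 q (p * q) p); split.
- rewrite [square 1 q _ _]square_rev !(squareC 1) square_neq // !inE !negb_or.
  by rewrite mulg_neqr // mulg_neql // qp1 eq_sym ncpq.
- exact: CAG_square_mul.
have qp : q != p by rewrite eq_sym.
by have [C4 [? ? ?]] := CAG_square_mul qS pS qp pq1; split.
Qed.

Lemma CAG_inverse_two_4cycles t : 3 < n -> t \in S -> t != t^-1 ->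
  exists C1 C2, [/\ C1 != C2, on_4cycle adj 1 t t^-1 C1 & on_4cycle adj 1 t t^-1 C2].
Proof.
move=> n3 tS tt.
(* With t = cyc3 a b c and d outside its support, both cyc3 a b d and cyc3 b c d
   are common neighbours of 1 and t. *)
have [d _ dt] : exists2 d, d \in [set: 'I_n] & d \notin supp t.
  apply/subsetPn; apply: contraL n3 => /subset_leq_card.
  by rewrite cardsT card_ord card_supp_three_cycle // leqNgt.
case/three_cyclesP: (tS) => a [b [c [ab bc ac tE]]].
have [da db dc] : [/\ d != a, d != b & d != c].
  by move: dt; rewrite tE supp_cyc3 // !inE -orbA !negb_or => /and3P.
have [ba ca cb] : [/\ b != a, c != a & c != b] by split; rewrite eq_sym.
have [ad bd cd] : [/\ a != d, b != d & c != d] by split; rewrite eq_sym.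
set s1 := cyc3 a b d; set s2 := cyc3 b c d.
have [s1S s2S] : s1 \in S /\ s2 \in S by split; apply: cyc3_three_cycles.
have ts1 : t * s1^-1 \in S.
  by rewrite tE cyc3_mulV ?cyc3_three_cycles //= !inE !negb_or ab ac ad bc bd cd.
have ts2 : t * s2^-1 \in S.
  by rewrite tE cyc3_rot // cyc3_mulV ?cyc3_three_cycles //= !inE !negb_or bc ba bd ca cd ad.
have ds1 : d \in supp s1 by rewrite supp_cyc3 // !inE eqxx orbT.
have ds2 : d \in supp s2 by rewrite supp_cyc3 // !inE eqxx orbT.
have dtV : d \notin supp t^-1 by rewrite suppV.
exists (square 1 s1 t t^-1), (square 1 s2 t t^-1); split.
- rewrite square_neq // !inE !negb_or three_cycle_neq1 // (supp_neq ds1 dt) (supp_neq ds1 dtV).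
  by rewrite andbT (@supp_neq _ _ _ a) // supp_cyc3 // !inE ?eqxx // !negb_or ab ac ad.
- exact: CAG_square_inv tS s1S ts1 (supp_neq ds1 dt) (supp_neq ds1 dtV) tt.
exact: CAG_square_inv tS s2S ts2 (supp_neq ds2 dt) (supp_neq ds2 dtV) tt.
Qed.

Lemma CAG_unique_4cycle_commuting p q : 3 < n -> p \in S -> q \in S -> p != q ->
  (exists! C, on_4cycle adj 1 p q C) -> commute p q /\ p * q != 1.
Proof.
move=> n3 pS qS pq [C0 [_ uniqC]].
have no_two C1 C2 : on_4cycle adj 1 p q C1 -> on_4cycle adj 1 p q C2 -> C1 = C2.
  by move=> h1 h2; rewrite -(uniqC _ h1) -(uniqC _ h2).
have cpq : commute p q.
  apply/eqP; apply: contraT => ncpq.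
  have [C1 [C2 [C12 h1 h2]]] := CAG_noncommuting_two_4cycles pS qS pq ncpq.
  by rewrite (no_two _ _ h1 h2) eqxx in C12.
split=> //; apply/negP=> /eqP pq1.
have qE : q = p^-1 by rewrite -(mulKg p q) pq1 mulg1.
rewrite qE in no_two pq.
have [C1 [C2 [C12 h1 h2]]] := CAG_inverse_two_4cycles n3 pS pq.
by rewrite (no_two _ _ h1 h2) eqxx in C12.
Qed.

End Cayley.

Theorem lemma3p1 (n : nat) (hn : 5 <= n) (tau kappa : 'S_n)
  (htau : tau \in three_cycles n) (hkappa : kappa \in three_cycles n)
  (hne : tau != kappa) :
  (tau * kappa = kappa * tau /\ tau * kappa != 1) <->
  (exists! C : {set {set 'S_n}},
     is_4cycle (@CAG_adj n) C /\
     [/\ 1 \in cycle_vertices C, tau \in cycle_vertices C & kappa \in cycle_vertices C]).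
Proof.
split=> [[comm_tk tk1] | ]; first exact: CAG_commuting_unique_4cycle.
exact: CAG_unique_4cycle_commuting (ltnW hn) htau hkappa hne.
Qed.
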